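(* Let $f:\mathbb{T}^2\to\mathbb{T}^2$ be an area preserving non-invertible endomorphism and suppose $U\subset\mathbb{T}^2$ is a regular open set with $f^{-1}(U)=U$. If $U_0$ is a connected component of $U$, then there exists $n\ge1$ such that $f^{-n}(U_0)=U_0$.
   Context: An endomorphism is a local homeomorphism (covering map) $f:\mathbb{T}^2\to\mathbb{T}^2$, $\mathbb{T}^2=\mathbb{R}^2/\mathbb{Z}^2$ with Haar measure $\lambda$; area preserving means $\lambda(f^{-1}(B))=\lambda(B)$ for all Borel $B$; non-invertible means degree at least two. An open set is regular if it equals the interior of its closure. *)

From HB Require Import structures.
From mathcomp Require Import all_boot all_order all_algebra generic_quotient.
From mathcomp Require Import all_classical all_reals all_analysis.
Set Implicit Arguments. Unset Strict Implicit. Unset Printing Implicit Defensive.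
Import Order.TTheory GRing.Theory Num.Theory.
Import numFieldNormedType.Exports.
Local Open Scope classical_set_scope.
Local Open Scope ring_scope.
Local Open Scope quotient_scope.

Section Torus.
Variable R : realType.

Definition torus_rel (x y : R * R) : bool :=
  ((x.1 - y.1) \is a Num.int) && ((x.2 - y.2) \is a Num.int).

Lemma torus_rel_refl : reflexive torus_rel.
Proof. by move=> x; rewrite /torus_rel !subrr rpred0. Qed.

Lemma torus_rel_sym : symmetric torus_rel.
Proof.
move=> x y; rewrite /torus_rel -(opprB x.1) -(opprB x.2).
by rewrite !rpredN.
Qed.

Lemma torus_rel_trans : transitive torus_rel.
Proof.
move=> y x z /andP[h1 h2] /andP[h3 h4]; apply/andP; split.
- by have := rpredD h1 h3; rewrite addrA subrK.
- by have := rpredD h2 h4; rewrite addrA subrK.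
Qed.

Canonical torus_equiv := EquivRel torus_rel torus_rel_refl torus_rel_sym
  torus_rel_trans.

End Torus.

Definition torus_quot (R : realType) := {eq_quot (torus_equiv R)}.
Notation torus R := (quotient_topology (torus_quot R)).

Section TorusMeasure.
Variable R : realType.

Definition torus_proj (p : R * R) : torus R := \pi_(torus R) p.

Definition torus_borel (B : set (torus R)) : Prop := <<s (@open (torus R)) >> B.

(* Haar (area) measure of T^2: Lebesgue measure of the trace of the
   lift of B on the fundamental domain [0,1) x [0,1). *)
Definition haar (B : set (torus R)) : \bar R :=
  ((@lebesgue_measure R) \x (@lebesgue_measure R))%E
    ((torus_proj @^-1` B) `&` (`[0, 1[ `*` `[0, 1[)).

End TorusMeasure.

Definition local_homeomorphism (T : topologicalType) (f : T -> T) : Prop :=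
  continuous f /\
  forall x : T, exists V : set T,
    [/\ open V, V x, {in V &, injective f} &
        forall W : set T, open W -> W `<=` V -> open (f @` W)].

Definition regular_open (T : topologicalType) (U : set T) : Prop :=
  open U /\ U = interior (closure U).

Definition area_preserving (R : realType) (f : torus R -> torus R) : Prop :=
  forall B : set (torus R), torus_borel B -> haar (f @^-1` B) = haar B.

(* Let W k be the component of U containing f^k x.  Since f maps components of
   U into components, W k is contained in f^-1 (W (k+1)), and the difference
   is open; as f preserves area, area (W k) is nondecreasing in k, with
   equality exactly when f^-1 (W (k+1)) = W k.  Distinct components are
   disjoint, have area at least area (W 0) > 0, and the torus has area 1, so
   W i = W j for some i < j.  Walking back through the equality cases gives
   W 0 = W p with p > 0, and then f^-p (W 0) = W 0. *)

From HB Require Import structures.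
From mathcomp Require Import all_boot all_order all_algebra generic_quotient.
From mathcomp Require Import all_classical all_reals all_analysis.
From mathcomp Require Import ring lra.
Import numFieldNormedType.Exports.
Set Implicit Arguments. Unset Strict Implicit. Unset Printing Implicit Defensive.
Import Order.TTheory GRing.Theory Num.Theory.
Local Open Scope classical_set_scope.
Local Open Scope ring_scope.

Section OpenContent.
Variables (R : realType) (T : topologicalType) (h : set T -> R).
Hypotheses
  (h_setU : forall A B, open A -> open B -> A `&` B = set0 ->
     h (A `|` B) = h A + h B)
  (h_gt0 : forall A, open A -> A !=set0 -> 0 < h A)
  (h_le1 : forall A, open A -> h A <= 1).

Lemma h_set0 : h set0 = 0.
Proof.
have := h_setU open0 open0 (setI0 set0); rewrite setU0 => e.
by apply: (addrI (h set0)); rewrite addr0 -e.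
Qed.

Lemma h_ge0 A : open A -> 0 <= h A.
Proof.
move=> oA; have [->|/set0P nA] := eqVneq A set0; first by rewrite h_set0.
exact/ltW/h_gt0.
Qed.

Section DisjointFamily.
Variable A : nat -> set T.
Hypotheses (oA : forall k, open (A k))
  (disjA : forall i j, (i < j)%N -> A i `&` A j = set0).

Lemma open_bigsetU n : open (\big[setU/set0]_(k < n) A k).
Proof. by elim/big_ind: _ => //; [exact: open0|exact: openU]. Qed.

Lemma h_bigsetU n :
  h (\big[setU/set0]_(k < n) A k) = \sum_(k < n) h (A k).
Proof.
elim: n => [|n IH]; first by rewrite !big_ord0 h_set0.
rewrite !big_ord_recr /= h_setU //.
- by congr (_ + _); exact: IH.
- exact: open_bigsetU.
- elim/big_ind: _ => [|B C BAn CAn|i _]; first exact: set0I.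
    by rewrite setIUl BAn CAn setU0.
  exact/disjA/ltn_ord.
Qed.

Lemma disjoint_opens_h_le0 c : (forall k, c <= h (A k)) -> c <= 0.
Proof.
move=> cA; have nc_le1 n : n%:R * c <= 1.
  apply: le_trans (h_le1 (open_bigsetU n)).
  rewrite h_bigsetU mulr_natl -[in c *+ n](card_ord n) -sumr_const.
  by apply: ler_sum => k _; exact: cA.
rewrite leNgt; apply/negP => c0.
have := nc_le1 (Num.truncn c^-1).+1.
by rewrite -ler_pdivlMr // mul1r leNgt truncnS_gt.
Qed.

End DisjointFamily.

Section ComponentPeriod.
Variables (f : T -> T) (U : set T).
Hypotheses (f_cont : continuous f) (fU : f @^-1` U = U)
  (open_component : forall z, open (connected_component U z))
  (h_preimage : forall A, open A -> h (f @^-1` A) = h A).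

Local Notation comp := (connected_component U).

Lemma component_eq a b : comp a `&` comp b !=set0 -> comp a = comp b.
Proof.
move=> [y [ay b_y]].
by rewrite (same_connected_component ay) (same_connected_component b_y).
Qed.

Lemma open_setD_component z : open (U `\` comp z).
Proof.
have -> : U `\` comp z = \bigcup_(y in U `\` comp z) comp y.
  apply/seteqP; split=> [y [Uy zy]|y [w [Uw zw] wy]].
    by exists y => //; exact: connected_component_refl.
  split; first exact: connected_component_sub wy.
  move=> zy; apply: zw; rewrite (component_eq (ex_intro _ y (conj zy wy))).
  exact: connected_component_refl.
by apply: bigcup_open => y _; exact: open_component.
Qed.

Lemma image_component z : U z -> f @` comp z `<=` comp (f z).
Proof.
move=> Uz; apply: connected_component_max.
- by exists z => //; exact: connected_component_refl.
- by move=> _ [y /connected_component_sub Uy <-]; rewrite -fU in Uy.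
- apply: connected_continuous_connected; first exact: component_connected.
  exact: continuous_subspaceT.
Qed.

Variable x : T.
Hypothesis Ux : U x.

Local Notation W k := (comp (iter k f x)).

Lemma U_iter k : U (iter k f x).
Proof. by elim: k => //= k IH; rewrite -fU in IH. Qed.

Lemma W_sub_preimage k : W k `<=` f @^-1` W k.+1.
Proof.
move=> y Wky.
by apply: image_component (U_iter k) _ (ex_intro2 _ _ y Wky erefl).
Qed.

Lemma open_preimage_setD_W k : open (f @^-1` W k.+1 `\` W k).
Proof.
have -> : f @^-1` W k.+1 `\` W k = f @^-1` W k.+1 `&` (U `\` W k).
  rewrite !setDE setIA; congr (_ `&` _); apply/esym/setIidl => y.
  by rewrite -[in X in _ -> X]fU => /connected_component_sub.
apply: openI; last exact: open_setD_component.
exact: (continuousP f).1 f_cont _ (open_component _).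
Qed.

Lemma h_W_succ k : h (W k.+1) = h (W k) + h (f @^-1` W k.+1 `\` W k).
Proof.
rewrite -h_preimage; last exact: open_component.
rewrite -(h_setU (open_component _) (open_preimage_setD_W k)); last first.
  by rewrite setDE setICA setICr setI0.
by rewrite setDUK //; exact: W_sub_preimage.
Qed.

Lemma h_W_nondecreasing : nondecreasing_seq (fun k => h (W k)).
Proof.
apply/nondecreasing_seqP => k; rewrite h_W_succ lerDl.
exact/h_ge0/open_preimage_setD_W.
Qed.

Lemma preimage_W_succ k : h (W k.+1) <= h (W k) -> f @^-1` W k.+1 = W k.
Proof.
rewrite h_W_succ gerDl => hD_le0.
have D0 : f @^-1` W k.+1 `\` W k = set0.
  apply/eqP/negPn/negP => /set0P nD.
  by have := h_gt0 (open_preimage_setD_W k) nD; rewrite ltNge hD_le0.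
by apply/seteqP; split; [by rewrite -setD_eq0 | exact: W_sub_preimage].
Qed.

Lemma exists_W_repeat : exists i j, (i < j)%N /\ W i = W j.
Proof.
apply: contrapT => no_repeat.
have disjW i j : (i < j)%N -> W i `&` W j = set0.
  move=> ij; apply/eqP/negPn/negP => /set0P meet; apply: no_repeat.
  by exists i, j; split => //; exact: component_eq.
have hW0 : 0 < h (W 0).
  apply: h_gt0 (open_component _) _.
  by exists x; exact: connected_component_refl.
suff : h (W 0) <= 0 by rewrite leNgt hW0.
apply: (disjoint_opens_h_le0 (fun k => open_component _) disjW) => k.
exact: h_W_nondecreasing.
Qed.

Lemma W_eq_pred i j : (i < j)%N -> W i.+1 = W j.+1 -> W i = W j.
Proof.
move=> ij e; have pre : f @^-1` W j.+1 = W j.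
  by apply: preimage_W_succ; rewrite -e; exact: h_W_nondecreasing.
have Wi_i : W i (iter i f x) by exact/connected_component_refl/U_iter.
apply: component_eq; exists (iter i f x); split => //.
by rewrite -pre -e; exact: W_sub_preimage.
Qed.

Lemma exists_W_period : exists2 p, (0 < p)%N & W 0 = W p.
Proof.
have [i [j [ij e]]] := exists_W_repeat.
elim: i j ij e => [|i IH] [|j] // ij e; first by exists j.+1.
by rewrite ltnS in ij; exact: IH j ij (W_eq_pred ij e).
Qed.

Lemma component_periodic :
  exists2 n, (1 <= n)%N & iter n f @^-1` comp x = comp x.
Proof.
have [p p_gt0 e] := exists_W_period.
have pre k : (k < p)%N -> f @^-1` W k.+1 = W k.
  move=> kp; apply: preimage_W_succ; apply: le_trans (h_W_nondecreasing kp) _.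
  by rewrite -e; exact: h_W_nondecreasing.
have iter_pre k : (k <= p)%N -> iter k f @^-1` W k = W 0.
  elim: k => [//|k IH] kp.
  by rewrite -[_ @^-1` _]/(iter k f @^-1` (f @^-1` W k.+1)) pre // IH // ltnW.
by exists p => //; have := iter_pre p (leqnn p); rewrite -e.
Qed.

End ComponentPeriod.
End OpenContent.

Section OpenSetsOfPlane.
Variable R : realType.

Lemma rat_itv_sub_ball (c e : R) : 0 < e ->
  exists a b : rat, ratr a < c < ratr b /\ `]ratr a, ratr b[ `<=` ball c e.
Proof.
move=> e0.
have [a] : exists a : rat, ratr a \in `](c - e), c[.
  by apply: rat_in_itvoo; rewrite ltrBlDr ltrDl.
rewrite in_itv /= => /andP[ea ac].
have [b] : exists b : rat, ratr b \in `]c, (c + e)[.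
  by apply: rat_in_itvoo; rewrite ltrDl.
rewrite in_itv /= => /andP[cb be].
exists a, b; rewrite ac cb; split => // y /=; rewrite ball_itv /= !in_itv /=.
by move=> /andP[ay yb]; rewrite (lt_trans ea ay) (lt_trans yb be).
Qed.

Lemma measurable_open_pair (B : set (R * R)) : open B -> measurable B.
Proof.
pose box (q : (rat * rat) * (rat * rat)) : set (R * R) :=
  `]ratr q.1.1, ratr q.1.2[ `*` `]ratr q.2.1, ratr q.2.2[.
move=> oB; have -> : B = \bigcup_(q in [set q | box q `<=` B]) box q.
  apply/seteqP; split=> [p Bp|y [q qB /qB] //].
  have /nbhs_ballP [e e0 epB] : nbhs p B by exact: open_nbhs_nbhs.
  have [a1 [b1 [/andP[a1p b1p] s1]]] := rat_itv_sub_ball p.1 e0.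
  have [a2 [b2 [/andP[a2p b2p] s2]]] := rat_itv_sub_ball p.2 e0.
  exists ((a1, b1), (a2, b2)).
    by move=> y [/= y1 y2]; apply: epB; split; [exact: s1|exact: s2].
  by split => /=; rewrite in_itv /= ?a1p ?b1p ?a2p ?b2p.
rewrite bigcup_mkcond; apply: countable_bigcupT_measurable => // q.
by case: ifP => _ //; apply: measurableX; exact: measurable_itv.
Qed.

Lemma connected_ball_pair (p : R * R) e : connected (ball p e).
Proof.
have connected_ballR (c : R) : connected (ball c e).
  by apply/connected_intervalP; rewrite ball_itv; exact: interval_is_interval.
have [e_gt0|e_le0] := ltP 0 e; last first.
  suff -> : ball p e = set0 by exact: connected0.
  apply/seteqP; split => // y [/= b1 _].
  by have := le_lt_trans (normr_ge0 _) b1; rewrite ltNge e_le0.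
set I := ball p.1 e; set J := ball p.2 e.
have -> : ball p e = \bigcup_(a in I) (([set a] `*` J) `|` (I `*` [set p.2])).
  apply/seteqP; split=> [y [y1 y2]|[u v] [a Ia [[/= -> Jv]|[Iu /= ->]]]].
    by exists y.1 => //; left; split.
  - by split => //; exact: ballxx.
  - by split => //; exact: ballxx.
apply: bigcup_connected => [|a Ia].
  by exists p => a Ia; right; split => //; exact: ballxx.
apply: connectedU.
- by exists (a, p.2); split; split => //; exact: ballxx.
- have -> : [set a] `*` J = (fun y => (a, y)) @` J.
    apply/seteqP; split=> [[u v] [/= -> Jv]|_ [v Jv <-] //]; by exists v.
  apply: connected_continuous_connected; first exact: connected_ballR.
  apply/continuous_subspaceT => y.
  exact: (@cvg_pair _ _ _ _ (nbhs a) (nbhs y)) (cvg_cst _) cvg_id.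
- have -> : I `*` [set p.2] = (fun y => (y, p.2)) @` I.
    apply/seteqP; split=> [[u v] [Iu /= ->]|_ [u Iu <-] //]; by exists u.
  apply: connected_continuous_connected; first exact: connected_ballR.
  apply/continuous_subspaceT => y.
  exact: (@cvg_pair _ _ _ _ (nbhs y) (nbhs p.2)) cvg_id (cvg_cst _).
Qed.

End OpenSetsOfPlane.

Section Torus.
Local Open Scope quotient_scope.
Variable R : realType.
Local Notation pr := (@torus_proj R).

Lemma torus_projP (p q : R * R) : pr p = pr q <-> torus_rel p q.
Proof.
split=> [e|rpq]; first exact/eqmodP.
by have : \pi_(torus_quot R) p = \pi_(torus_quot R) q by exact/eqmodP.
Qed.

Lemma torus_proj_repr (y : torus R) : pr (repr y) = y.
Proof. exact: reprK. Qed.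

Lemma open_torus_proj_image (W : set (R * R)) : open W -> open (pr @` W).
Proof.
move=> oW; change (open (pr @^-1` (pr @` W))).
rewrite openE => q [w Ww /torus_projP /andP [r1 r2]].
have /nbhs_ballP [e e0 ewW] : nbhs w W by exact: open_nbhs_nbhs.
apply/nbhs_ballP; exists e => // q' [/= b1 b2].
exists (q'.1 - q.1 + w.1, q'.2 - q.2 + w.2).
  apply: ewW; split => /=; rewrite /ball /=.
  - by have -> : w.1 - (q'.1 - q.1 + w.1) = q.1 - q'.1 by ring.
  - by have -> : w.2 - (q'.2 - q.2 + w.2) = q.2 - q'.2 by ring.
apply/torus_projP/andP; split => /=.
  by have -> : q'.1 - q.1 + w.1 - q'.1 = w.1 - q.1 by ring.
by have -> : q'.2 - q.2 + w.2 - q'.2 = w.2 - q.2 by ring.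
Qed.

Lemma open_torus_component (A : set (torus R)) z :
  open A -> open (connected_component A z).
Proof.
move=> oA; rewrite openE => y zy.
have /nbhs_ballP [e e0 eA] : nbhs (repr y) (pr @^-1` A).
  apply: open_nbhs_nbhs; split; first exact: oA.
  by rewrite /= torus_proj_repr; exact: connected_component_sub zy.
have oC : open (pr @` ball (repr y) e).
  exact/open_torus_proj_image/ball_open.
have Cy : (pr @` ball (repr y) e) y.
  by exists (repr y); [exact: ballxx|exact: torus_proj_repr].
apply: filterS (open_nbhs_nbhs (conj oC Cy)).
rewrite (same_connected_component zy); apply: connected_component_max => //.
  by move=> _ [p /eA Ap <-].
apply: connected_continuous_connected; first exact: connected_ball_pair.
exact/continuous_subspaceT/pi_continuous.
Qed.

Local Notation mu := ((@lebesgue_measure R) \x (@lebesgue_measure R))%E.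
Local Notation square := (`[(0:R), 1[ `*` `[(0:R), 1[).

Lemma measurable_square : measurable square.
Proof. by apply: measurableX; exact: measurable_itv. Qed.

Lemma measurable_trace (A : set (torus R)) : open A ->
  measurable (pr @^-1` A `&` square).
Proof.
move=> oA; apply: measurableI measurable_square.
exact: measurable_open_pair.
Qed.

Lemma haar_setU (A B : set (torus R)) : open A -> open B -> A `&` B = set0 ->
  haar (A `|` B) = (haar A + haar B)%E.
Proof.
move=> oA oB AB; rewrite /haar preimage_setU setIUl.
rewrite measureU //; try exact: measurable_trace.
apply/seteqP; split => // p [[Ap _] [Bp _]].
by have : (A `&` B) (pr p) by []; rewrite AB.
Qed.

Lemma haar_le1 (A : set (torus R)) : open A -> (haar A <= 1)%E.
Proof.
move=> oA; have <- : mu square = 1%E.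
  have L := @lebesgue_measure_itv R `[(0:R), 1[%R.
  rewrite /= lte01 oppr0 adde0 in L.
  rewrite product_measure1E; try exact: measurable_itv.
  by rewrite [X in (X * _)%E]L [X in (_ * X)%E]L mule1.
rewrite /haar; apply: le_measure; rewrite ?inE.
- exact: measurable_trace.
- exact: measurable_square.
- by move=> p [].
Qed.

Lemma haar_fin_num (A : set (torus R)) : open A -> haar A \is a fin_num.
Proof.
move=> oA; rewrite ge0_fin_numE ?measure_ge0 //.
exact: le_lt_trans (haar_le1 oA) (ltry _).
Qed.

Lemma torus_proj_square (y : torus R) : exists2 p, square p & pr p = y.
Proof.
set p := repr y; exists (p.1 - (Num.floor p.1)%:~R, p.2 - (Num.floor p.2)%:~R).
  split; rewrite /= in_itv /= subr_ge0 Num.Theory.floor_le ltrBlDl.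
  - by rewrite -[1]/(1%:~R) -intrD Num.Theory.floorD1_gt.
  - by rewrite -[1]/(1%:~R) -intrD Num.Theory.floorD1_gt.
rewrite -(torus_proj_repr y) -/p; apply/torus_projP/andP.
by split; rewrite /= addrAC subrr add0r rpredN intr_int.
Qed.

Lemma haar_gt0 (A : set (torus R)) : open A -> A !=set0 -> (0 < haar A)%E.
Proof.
move=> oA [y Ay]; have [p sq_p pA] := torus_proj_square y.
have /nbhs_ballP [e e0 eA] : nbhs p (pr @^-1` A).
  by apply: open_nbhs_nbhs; split => //=; rewrite pA.
move: sq_p => [] /=; rewrite !in_itv /=.
move=> /andP[p1_ge0 p1_lt1] /andP[p2_ge0 p2_lt1].
set d := Order.min e (Order.min (1 - p.1) (1 - p.2)).
have d_gt0 : 0 < d by rewrite !lt_min e0 !subr_gt0 p1_lt1 p2_lt1.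
have [de d1 d2] : [/\ d <= e, d <= 1 - p.1 & d <= 1 - p.2].
  by rewrite !ge_min !lexx !orbT.
have side a : lebesgue_measure `[a, a + d[ = d%:E.
  have L := @lebesgue_measure_itv R `[a, a + d[%R.
  by rewrite /= lte_fin ltrDl d_gt0 -EFinD addrAC subrr add0r in L.
have QA : `[p.1, p.1 + d[ `*` `[p.2, p.2 + d[ `<=` pr @^-1` A `&` square.
  move=> q [] /=; rewrite !in_itv /= => /andP[q1l q1r] /andP[q2l q2r].
  split; last by split => /=; apply/andP; split; lra.
  by apply: (eA q); split; rewrite /ball /= ltr_norml; apply/andP; split; lra.
have mQ : measurable (`[p.1, p.1 + d[ `*` `[p.2, p.2 + d[).
  by apply: measurableX; exact: measurable_itv.
apply: (@lt_le_trans _ _ (mu (`[p.1, p.1 + d[ `*` `[p.2, p.2 + d[))).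
  rewrite product_measure1E; try exact: measurable_itv.
  by rewrite [X in (X * _)%E]side [X in (_ * X)%E]side -EFinM lte_fin mulr_gt0.
by rewrite /haar; apply: le_measure; rewrite ?inE //; exact: measurable_trace.
Qed.

Definition area (A : set (torus R)) : R := fine (haar A).

Lemma area_setU (A B : set (torus R)) : open A -> open B -> A `&` B = set0 ->
  area (A `|` B) = area A + area B.
Proof. by move=> oA oB AB; rewrite /area haar_setU // fineD ?haar_fin_num. Qed.

Lemma area_gt0 (A : set (torus R)) : open A -> A !=set0 -> 0 < area A.
Proof.
move=> oA nA; apply: fine_gt0; rewrite haar_gt0 //=.
exact: le_lt_trans (haar_le1 oA) (ltry _).
Qed.

Lemma area_le1 (A : set (torus R)) : open A -> area A <= 1.
Proof.
by move=> oA; apply: (@fine_le _ _ 1%E); rewrite ?haar_fin_num ?haar_le1.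
Qed.

End Torus.

Theorem lemma5 (R : realType) (f : torus R -> torus R)
    (U U0 : set (torus R)) :
  local_homeomorphism f ->
  area_preserving f ->
  ~ injective f ->
  regular_open U ->
  f @^-1` U = U ->
  (exists2 x, U x & U0 = connected_component U x) ->
  exists2 n : nat, (1 <= n)%N & (iter n f) @^-1` U0 = U0.
Proof.
move=> [f_cont _] f_area _ [oU _] fU [x Ux ->].
have area_preimage A : open A -> area (f @^-1` A) = area A.
  by move=> oA; rewrite /area f_area //; exact: sub_sigma_algebra.
exact: (component_periodic (@area_setU R) (@area_gt0 R) (@area_le1 R)
  f_cont fU (fun z => open_torus_component oU) area_preimage Ux).
Qed.
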